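(* Fix $n\ge1$ and $r,c\in[n]$. The map $(\pi,T)\mapsto G(\pi,T)$ is a bijection from the set of pairs $(\pi,T)\in S_n\times\mathcal{T}_r(n)$ with $\pi(r)=c$ onto the set $\mathcal{G}_r$ of $r$-bi-trees.
   Context: $S_n$ is the set of permutations of $[n]$. An arborescence rooted at $r$ on $[n]$ is a set $T$ of directed edges $u\to v$ on $[n]$ such that from every vertex there is exactly one directed path to $r$; $\mathcal{T}_r(n)$ is the set of these. Consider bipartite graphs on the $2n$ vertices $\{1_L,\dots,n_L\}\cup\{1_R,\dots,n_R\}$ (edges join a left vertex to a right vertex). For $\pi\in S_n$ and $T\in\mathcal{T}_r(n)$, $G(\pi,T)$ is the undirected bipartite graph with edge set $\{(u_L,\pi(u)_R):u\in[n]\setminus\{r\}\}\cup\{(u_L,\pi(v)_R): u\to v\in T\}$. An $r$-bi-tree is an undirected bipartite graph $G$ on these $2n$ vertices such that (i) $r_L$ is an isolated vertex, (ii) all vertices other than $r_L$ lie in a single connected component, and (iii) every left vertex $u_L$ with $u\neq r$ has degree exactly $2$. $\mathcal{G}_r$ is the set of $r$-bi-trees. *)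

From mathcomp Require Import all_boot all_fingroup.
Set Implicit Arguments. Unset Strict Implicit. Unset Printing Implicit Defensive.

(* A set of directed edges u -> v on [n] is a
   {set 'I_n * 'I_n} (pair (u, v) = edge u -> v).  A bipartite graph on
   {1_L..n_L} u {1_R..n_R} is a {set 'I_n * 'I_n}, the pair (u, v) meaning the
   undirected edge u_L -- v_R. *)

Definition is_arborescence n (r : 'I_n) (T : {set 'I_n * 'I_n}) : Prop :=
  forall u : 'I_n,
    exists! p : seq 'I_n,
      path (fun x y => (x, y) \in T) u p && (last u p == r).

Definition Gmap n (r : 'I_n) (pi : {perm 'I_n}) (T : {set 'I_n * 'I_n})
  : {set 'I_n * 'I_n} :=
  [set (u, pi u) | u in [set~ r]] :|: [set (e.1, pi e.2) | e in T].

(* adjacency on the 2n vertices: inl u = u_L, inr v = v_R *)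
Definition bip_adj n (G : {set 'I_n * 'I_n}) : rel ('I_n + 'I_n) :=
  fun x y =>
    match x, y with
    | inl u, inr v => (u, v) \in G
    | inr v, inl u => (u, v) \in G
    | _, _ => false
    end.

Definition is_bitree n (r : 'I_n) (G : {set 'I_n * 'I_n}) : Prop :=
  [/\ (forall v : 'I_n, (r, v) \notin G),
      (forall x y : 'I_n + 'I_n, x != inl r -> y != inl r ->
          connect (bip_adj G) x y)
    & (forall u : 'I_n, u != r -> #|[set v | (u, v) \in G]| = 2)].

From mathcomp Require Import all_boot all_fingroup.
Set Implicit Arguments. Unset Strict Implicit. Unset Printing Implicit Defensive.

(* In G(pi, T) a left vertex u_L <> r_L is adjacent exactly to pi(u)_R and
   pi(v)_R, where u -> v is its arc in T.  Hence T-paths to r give paths to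
   pi(r)_R, and, walking down T from r, pi(u) is read off as the neighbour of
   u_L other than pi(v)_R.
   Conversely, take a potential h on a bi-tree G such that every vertex other
   than r_L and c_R has a neighbour of smaller potential (e.g. the distance to
   c_R).  Sending each w <> c to a left neighbour u of w_R lying below w_R is
   injective, because u_L has just two neighbours and one of them lies below
   u_L; so it is a bijection [n] \ {c} -> [n] \ {r}, whose inverse extended by
   r |-> c is pi.  The arcs u -> pi^-1(w), for w_R the other neighbour of u_L,
   form T, an arborescence because h decreases along them. *)

Lemma eq_in_cards2 (T : finType) (A : {set T}) x a b :
  #|A| = 2 -> x \in A -> a \in A -> b \in A -> a != x -> b != x -> a = b.
Proof.
move=> /eqP/cards2P[y [z [_ ->]]]; rewrite !inE.
by do 3 case/pred2P=> ->; rewrite ?eqxx.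
Qed.

Lemma descent_path (V : eqType) (e : rel V) (f : V -> nat) (z : V) :
  (forall x, x != z -> exists2 y, e x y & f y < f x) ->
  forall x, exists p, path e x p && (last x p == z).
Proof.
move=> desc; suff walk k x : f x < k -> exists p, path e x p && (last x p == z).
  by move=> x; apply: (walk (f x).+1).
elim: k x => // k IH x fx.
have [->|xz] := eqVneq x z; first by exists [::]; rewrite /= eqxx.
have [y xy fy] := desc x xz.
have [p hp] := IH y (leq_trans fy fx).
by exists (y :: p); rewrite /= xy.
Qed.

Section Potential.
Variables (V : finType) (e : rel V) (z : V).

Fixpoint walk_to k x :=
  if k is k'.+1 then [exists y, e x y && walk_to k' y] else x == z.

Lemma connect_walk_to x : connect e x z -> exists k, walk_to k x.
Proof.
case/connectP=> p; elim: p x => [|y p IH] x /=.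
  by move=> _ <-; exists 0; rewrite /= eqxx.
case/andP=> xy hp hz; have [k hk] := IH y hp hz.
by exists k.+1; apply/existsP; exists y; rewrite xy.
Qed.

Lemma exists_potential : exists h : V -> nat,
  forall x, x != z -> connect e x z -> exists2 y, e x y & h y < h x.
Proof.
have hex x : exists k, ~~ connect e x z || walk_to k x.
  have [/connect_walk_to[k hk]|_] := boolP (connect e x z); last by exists 0.
  by exists k; rewrite hk orbT.
(* the length of a shortest walk from x to z, and 0 if there is none *)
exists (fun x => ex_minn (hex x)) => x xz xzc.
case: (ex_minnP (hex x)) => -[|k]; rewrite xzc /= ?(negbTE xz) //.
case/existsP=> y /andP[xy hy] _; exists y => //.
by case: (ex_minnP (hex y)) => m _ /(_ k); rewrite hy orbT ltnS; apply.
Qed.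

End Potential.

Section Arborescence.
Variables (n : nat) (r : 'I_n) (T : {set 'I_n * 'I_n}).
Hypothesis arbT : is_arborescence r T.

Lemma arb_root_out v : (r, v) \notin T.
Proof.
apply/negP=> rv.
have [p [/andP[hp hl] _]] := arbT v.
have [q [_ uq]] := arbT r.
have e1 : q = [::] by apply: uq; rewrite /= eqxx.
have e2 : q = v :: p by apply: uq; rewrite /= rv hp hl.
by rewrite e1 in e2.
Qed.

Lemma arb_out_neq_root u v : (u, v) \in T -> u != r.
Proof. by apply: contraTneq => ->; apply: arb_root_out. Qed.

Lemma arb_functional u v1 v2 : (u, v1) \in T -> (u, v2) \in T -> v1 = v2.
Proof.
move=> h1 h2.
have [p1 [/andP[hp1 hl1] _]] := arbT v1.
have [p2 [/andP[hp2 hl2] _]] := arbT v2.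
have [q [_ uq]] := arbT u.
have e1 : q = v1 :: p1 by apply: uq; rewrite /= h1 hp1 hl1.
have e2 : q = v2 :: p2 by apply: uq; rewrite /= h2 hp2 hl2.
by rewrite e1 in e2; case: e2.
Qed.

Lemma arb_irrefl u : (u, u) \notin T.
Proof.
apply/negP=> uu.
have [q [/andP[hq hl] uq]] := arbT u.
have e : q = u :: q by apply: uq; rewrite /= uu hq hl.
by have := congr1 size e => /= /n_Sn.
Qed.

Lemma arb_succ u : u != r -> exists v, (u, v) \in T.
Proof.
move=> ur; have [[|v q] [/andP[hq hl] _]] := arbT u.
  by rewrite /= (negbTE ur) in hl.
by case/andP: hq => uv _; exists v.
Qed.

Lemma arb_ind (Q : 'I_n -> Prop) :
  Q r -> (forall u v, (u, v) \in T -> Q v -> Q u) -> forall u, Q u.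
Proof.
move=> Qr IH u; have [p [/andP[hp /eqP hl] _]] := arbT u.
elim: p u hp hl => [|v p IHp] u /=; first by move=> _ ->.
by case/andP=> uv hp hl; apply: (IH u v uv); apply: IHp.
Qed.

End Arborescence.

Lemma arborescence_of_descent n (r : 'I_n) (T : {set 'I_n * 'I_n})
    (f : 'I_n -> nat) :
  (forall v, (r, v) \notin T) ->
  (forall u v1 v2, (u, v1) \in T -> (u, v2) \in T -> v1 = v2) ->
  (forall u, u != r -> exists2 v, (u, v) \in T & f v < f u) ->
  is_arborescence r T.
Proof.
move=> rT funT desc u; have [p hp] := descent_path desc u.
exists p; split=> // q; elim: p u q hp => [|v p IH] u [|v' q] //=.
- by move=> /eqP -> /andP[/andP[rv' _] _]; rewrite (negbTE (rT v')) in rv'.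
- by move=> /andP[/andP[uv _] _] /eqP uq; rewrite uq (negbTE (rT v)) in uv.
case/andP=> /andP[uv hp] hl /andP[/andP[uv' hq] hl'].
have vv' := funT _ _ _ uv uv'; subst v'.
by congr (_ :: _); apply: (IH v); apply/andP.
Qed.

Lemma GmapP n (r : 'I_n) (pi : {perm 'I_n}) (T : {set 'I_n * 'I_n}) x y :
  reflect ((x != r /\ y = pi x) \/ (exists2 v, (x, v) \in T & y = pi v))
          ((x, y) \in Gmap r pi T).
Proof.
apply: (iffP setUP) => [[]|[[xr ->]|[v xv ->]]].
- by case/imsetP=> u ur [-> ->]; left; rewrite -in_setC1.
- by case/imsetP=> -[u v] uv [-> ->]; right; exists v.
- by left; apply/imsetP; exists x; rewrite ?in_setC1.
- by right; apply/imsetP; exists (x, v).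
Qed.

Lemma bip_adj_sym n (G : {set 'I_n * 'I_n}) : symmetric (bip_adj G).
Proof. by move=> [a|a] [b|b]. Qed.

Lemma Gmap_bitree n (r : 'I_n) (pi : {perm 'I_n}) (T : {set 'I_n * 'I_n}) :
  is_arborescence r T -> is_bitree r (Gmap r pi T).
Proof.
move=> arbT; set G := Gmap r pi T.
have right_to_root u : connect (bip_adj G) (inr (pi u)) (inr (pi r)).
  elim/(arb_ind arbT): u => [|u v uv IH]; first exact: connect0.
  apply: connect_trans IH; apply: (connect_trans (y := inl u));
    apply: connect1; apply/GmapP; last by right; exists v.
  by left; split; first exact: arb_out_neq_root uv.
have to_root x : x != inl r -> connect (bip_adj G) x (inr (pi r)).
  case: x => [u ur|w _]; last by rewrite -(permKV pi w).
  apply: connect_trans (right_to_root u); apply: connect1; apply/GmapP.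
  by left; split=> //; apply: contra_neq ur => ->.
split.
- move=> v; apply/GmapP=> -[[]|[v' rv' _]]; first by rewrite eqxx.
  by rewrite (negbTE (arb_root_out arbT v')) in rv'.
- move=> x y xr yr; apply: connect_trans (to_root x xr) _.
  by rewrite (sym_connect_sym (@bip_adj_sym n G)); apply: to_root.
move=> u ur; have [v uv] := arb_succ arbT ur.
have -> : [set w | (u, w) \in G] = [set pi u; pi v].
  apply/setP=> w; rewrite in_set in_set2; apply/GmapP/pred2P.
    case=> [[_ ->]|[v' uv' ->]]; first by left.
    by right; rewrite (arb_functional arbT uv' uv).
  by case=> ->; [left | right; exists v].
suff uv_neq : u != v by rewrite cards2 (inj_eq perm_inj) uv_neq.
by apply: contraNneq (arb_irrefl arbT u) => vu; rewrite {2}vu.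
Qed.

Definition arcs_of n (pi : {perm 'I_n}) (G : {set 'I_n * 'I_n}) :
    {set 'I_n * 'I_n} :=
  [set e | (e.2 != e.1) && ((e.1, pi e.2) \in G)].

Lemma arcs_of_Gmap n (r : 'I_n) (pi : {perm 'I_n}) (T : {set 'I_n * 'I_n}) :
  is_arborescence r T -> arcs_of pi (Gmap r pi T) = T.
Proof.
move=> arbT; apply/setP=> -[u v]; rewrite inE /=; apply/andP/idP.
  case=> vu /GmapP[[_ /perm_inj vu_eq]|[v' uv' /perm_inj ->//]].
  by rewrite vu_eq eqxx in vu.
move=> uv; split; last by apply/GmapP; right; exists v.
by apply: contraNneq (arb_irrefl arbT u) => vu; rewrite -{2}vu.
Qed.

Lemma Gmap_inj n (r : 'I_n) (pi1 pi2 : {perm 'I_n})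
    (T1 T2 : {set 'I_n * 'I_n}) :
  pi1 r = pi2 r -> is_arborescence r T1 -> is_arborescence r T2 ->
  Gmap r pi1 T1 = Gmap r pi2 T2 -> pi1 = pi2 /\ T1 = T2.
Proof.
move=> pi_r arb1 arb2 eqG.
have pi_eq : pi1 = pi2.
  apply/permP; elim/(arb_ind arb1) => // u v uv IH.
  have : (u, pi2 u) \in Gmap r pi1 T1.
    by rewrite eqG; apply/GmapP; left; split=> //; apply: arb_out_neq_root uv.
  case/GmapP=> [[_ ->] // | [v' uv']].
  rewrite (arb_functional arb1 uv' uv) IH => /perm_inj vu.
  by move: uv; rewrite -vu (negbTE (arb_irrefl arb1 u)).
split=> //; subst pi2.
by rewrite -(arcs_of_Gmap pi1 arb1) -(arcs_of_Gmap pi1 arb2) eqG.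
Qed.

Lemma Gmap_arcs_of n (r : 'I_n) (pi : {perm 'I_n}) (G : {set 'I_n * 'I_n}) :
  (forall v, (r, v) \notin G) -> (forall u, u != r -> (u, pi u) \in G) ->
  Gmap r pi (arcs_of pi G) = G.
Proof.
move=> rG piG; apply/setP=> -[x y]; apply/GmapP/idP.
  by case=> [[/piG xG ->] | [v]] //; rewrite inE => /andP[_ xv] ->.
move=> xy; have xr : x != r by apply: contraTneq xy => ->; apply: rG.
have [->|ne] := eqVneq y (pi x); first by left.
right; exists ((pi^-1)%g y); last by rewrite permKV.
rewrite inE /= permKV xy andbT.
by apply: contra_neq ne => <-; rewrite permKV.
Qed.

Section BitreeDecomposition.
Variables (n : nat) (r c : 'I_n) (G : {set 'I_n * 'I_n}).
Variable h : 'I_n + 'I_n -> nat.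
Hypothesis bitreeG : is_bitree r G.
Hypothesis h_descent : forall x, x != inl r -> x != inr c ->
  exists2 y, bip_adj G x y & h y < h x.

Lemma bitree_out_neq_root u w : (u, w) \in G -> u != r.
Proof. by case: bitreeG => rG _ _; apply: contraTneq => ->; apply: rG. Qed.

Lemma bitree_nbr_eq u x a b :
  (u, x) \in G -> (u, a) \in G -> (u, b) \in G -> a != x -> b != x -> a = b.
Proof.
move=> ux ua ub; case: bitreeG => _ _ /(_ u (bitree_out_neq_root ux)) deg2.
by apply: (eq_in_cards2 deg2); rewrite inE.
Qed.

Lemma bitree_down_nbr u :
  u != r -> exists2 w, (u, w) \in G & h (inr w) < h (inl u).
Proof.
move=> ur; have ur' : inl u != inl r :> 'I_n + 'I_n.
  by apply: contra_neq ur => -[].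
by have [[//|w] uw hw] := h_descent ur' isT; exists w.
Qed.

Definition parent w :=
  if w == c then r
  else odflt r [pick u | ((u, w) \in G) && (h (inl u) < h (inr w))].

Lemma parent_c : parent c = r.
Proof. by rewrite /parent eqxx. Qed.

Lemma parentP w :
  w != c -> (parent w, w) \in G /\ h (inl (parent w)) < h (inr w).
Proof.
move=> wc; rewrite /parent (negbTE wc).
have wc' : inr w != inr c :> 'I_n + 'I_n by apply: contra_neq wc => -[].
have [[u|//] /= uw hu] := h_descent (x := inr w) isT wc'.
by case: pickP => [u' /andP[] // | /(_ u)]; rewrite uw hu.
Qed.

Lemma parent_neq_root w : w != c -> parent w != r.
Proof. by case/parentP=> /bitree_out_neq_root. Qed.

Lemma parent_inj : injective parent.
Proof.
move=> w1 w2; have [->|c1] := eqVneq w1 c; have [->|c2] := eqVneq w2 c => //.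
- by rewrite parent_c => /esym/eqP; rewrite (negbTE (parent_neq_root c2)).
- by rewrite parent_c => /eqP; rewrite (negbTE (parent_neq_root c1)).
move=> e; have [g1 h1] := parentP c1; have [g2 h2] := parentP c2.
rewrite e in g1 h1; have [w3 g3 h3] := bitree_down_nbr (parent_neq_root c2).
have below w : h (inl (parent w2)) < h (inr w) -> w != w3.
  by move=> hw; apply: contraTneq h3 => <-; rewrite -leqNgt ltnW.
exact: (bitree_nbr_eq g3 g1 g2 (below _ h1) (below _ h2)).
Qed.

Definition bitree_perm : {perm 'I_n} := ((perm parent_inj)^-1)%g.

Lemma parent_bitree_perm u : parent (bitree_perm u) = u.
Proof. by have := permKV (perm parent_inj) u; rewrite permE. Qed.

Lemma bitree_perm_root : bitree_perm r = c.
Proof. by apply: parent_inj; rewrite parent_bitree_perm parent_c. Qed.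

Lemma bitree_perm_up u :
  u != r -> (u, bitree_perm u) \in G /\ h (inl u) < h (inr (bitree_perm u)).
Proof.
move=> ur; have wc : bitree_perm u != c.
  by apply: contra_neq ur => wc; rewrite -(parent_bitree_perm u) wc parent_c.
by have := parentP wc; rewrite parent_bitree_perm.
Qed.

Lemma arcs_of_bitree_arborescence : is_arborescence r (arcs_of bitree_perm G).
Proof.
apply: (arborescence_of_descent (f := fun v => h (inr (bitree_perm v)))).
- move=> v; rewrite inE /=; case: bitreeG => rG _ _.
  by rewrite (negbTE (rG _)) andbF.
- move=> u v1 v2; rewrite !inE /= => /andP[vu1 g1] /andP[vu2 g2].
  have [g0 _] := bitree_perm_up (bitree_out_neq_root g1).
  apply: perm_inj; apply: (bitree_nbr_eq g0 g1 g2);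
    by rewrite (inj_eq perm_inj).
move=> u ur; have [w uw hw] := bitree_down_nbr ur.
have [_ hu] := bitree_perm_up ur.
exists ((bitree_perm^-1)%g w); last by rewrite permKV (ltn_trans hw).
rewrite inE /= permKV uw andbT; apply: contraTneq hw => vu.
by move: hu; rewrite -vu permKV -leqNgt; apply: ltnW.
Qed.

End BitreeDecomposition.

Lemma Gmap_surj n (r c : 'I_n) (G : {set 'I_n * 'I_n}) :
  is_bitree r G ->
  exists (pi : {perm 'I_n}) (T : {set 'I_n * 'I_n}),
    [/\ pi r = c, is_arborescence r T & Gmap r pi T = G].
Proof.
move=> bitreeG; have [rG conn _] := bitreeG.
have [h h_desc] := exists_potential (bip_adj G) (inr c).
have h_descent x : x != inl r -> x != inr c ->
    exists2 y, bip_adj G x y & h y < h x.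
  by move=> xr xc; apply: h_desc x xc (conn x (inr c) xr isT).
set pi := bitree_perm bitreeG h_descent.
exists pi, (arcs_of pi G); split.
- exact: bitree_perm_root.
- exact: arcs_of_bitree_arborescence.
- by apply: Gmap_arcs_of => // u /(bitree_perm_up bitreeG h_descent)[].
Qed.

Theorem lemma3p8 (n : nat) (hn : (1 <= n)%N) (r c : 'I_n) :
  [/\ (forall (pi : {perm 'I_n}) (T : {set 'I_n * 'I_n}),
         pi r = c -> is_arborescence r T -> is_bitree r (Gmap r pi T)),
      (forall (pi1 pi2 : {perm 'I_n}) (T1 T2 : {set 'I_n * 'I_n}),
         pi1 r = c -> is_arborescence r T1 ->
         pi2 r = c -> is_arborescence r T2 ->
         Gmap r pi1 T1 = Gmap r pi2 T2 -> pi1 = pi2 /\ T1 = T2)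
    & (forall G : {set 'I_n * 'I_n}, is_bitree r G ->
         exists (pi : {perm 'I_n}) (T : {set 'I_n * 'I_n}),
           [/\ pi r = c, is_arborescence r T & Gmap r pi T = G])].
Proof.
split=> [pi T _ | pi1 pi2 T1 T2 pi1r arb1 pi2r arb2 | G].
- exact: Gmap_bitree.
- exact: Gmap_inj (etrans pi1r (esym pi2r)) arb1 arb2.
- exact: Gmap_surj.
Qed.
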